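(* Let $D$ be a digraph with $\mathrm{ddp}(D)=k$. Then there exists a valid DAG-depth decomposition of $D$ of depth $k$.
   Context: A reachable fragment of a digraph $D$ is a vertex set $R\subseteq V(D)$, maximal by inclusion, that contains a vertex from which every vertex of $R$ is reachable by a directed path in $D$; it is regarded as the induced subdigraph $D[R]$. The DAG-depth $\mathrm{ddp}(D)$ is defined recursively: $\mathrm{ddp}(D)=1$ if $|V(D)|=1$; if $D$ has exactly one reachable fragment and $|V(D)|>1$, then $\mathrm{ddp}(D)=1+\min_{v\in V(D)}\mathrm{ddp}(D-v)$; otherwise, with reachable fragments $R_1,\dots,R_p$, $\mathrm{ddp}(D)=\max_i\mathrm{ddp}(D[R_i])$. A DAG-depth decomposition of $D$ is a pair $(P,\mathrm{org})$ with $P$ a directed acyclic graph and $\mathrm{org}:V(P)\to V(D)$ surjective. Roots of $P$ are vertices of indegree $0$; $w'$ is a descendant of $v'$ if $P$ has a directed path from $v'$ to $w'$. The depth of $P$ is the maximum number of vertices on a directed path in $P$. The decomposition is valid if for every $v'\in V(P)$ with $\mathrm{org}(v')=v$ and every $u\in N^+_D(v)$, either (1) some $u'$ with $\mathrm{org}(u')=u$ is a descendant of $v'$ in $P$, or (2) every directed path in $P$ from a root of $P$ to $v'$ contains a vertex $u'$ with $\mathrm{org}(u')=u$. *)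

From mathcomp Require Import all_boot.
Set Implicit Arguments. Unset Strict Implicit. Unset Printing Implicit Defensive.

Section DAGDepth.
Variables (V : finType) (E : rel V).

Definition induced (S : {set V}) : rel V :=
  [rel x y | [&& x \in S, y \in S & E x y]].

Definition reach (S : {set V}) (r : V) : {set V} :=
  [set y in S | connect (induced S) r y].

Definition frag_cand (S R : {set V}) : bool :=
  (R \subset S) && [exists r in R, R \subset reach S r].

Definition fragments (S : {set V}) : {set {set V}} :=
  [set R | frag_cand S R &&
           [forall R' : {set V}, (frag_cand S R' && (R \subset R')) ==> (R' == R)]].

(* DAG-depth with fuel; the fuel #|S| suffices since recursive calls are on
   strictly smaller vertex sets. *)
Fixpoint ddp_fuel (n : nat) (S : {set V}) : nat :=
  match n with
  | 0 => 0
  | n'.+1 =>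
      if #|S| == 1 then 1
      else if #|fragments S| == 1 then
        (\big[minn/#|S|]_(v in S) ddp_fuel n' (S :\ v)).+1
      else \max_(R in fragments S) ddp_fuel n' R
  end.

(* ddp(D[S]) for nonempty S. *)
Definition ddp (S : {set V}) : nat := ddp_fuel #|S| S.

End DAGDepth.

Section Decomposition.
Variables (V : finType) (E : rel V) (n : nat) (F : rel 'I_n) (org : 'I_n -> V).

Definition acyclic_rel : Prop := forall x y : 'I_n, F x y -> ~~ connect F y x.

Definition is_root (w : 'I_n) : bool := [forall x, ~~ F x w].

Definition descendant (v' w' : 'I_n) : bool := connect F v' w'.

(* Number of vertices on a directed path x :: p is (size p).+1. *)
Definition depth (k : nat) : Prop :=
  (exists (x : 'I_n) (p : seq 'I_n), path F x p /\ (size p).+1 = k) /\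
  (forall (x : 'I_n) (p : seq 'I_n), path F x p -> (size p).+1 <= k).

Definition valid_decomp : Prop :=
  acyclic_rel /\
  (forall v : V, exists w : 'I_n, org w = v) /\
  (forall (v' : 'I_n) (u : V), E (org v') u ->
     (exists u' : 'I_n, org u' = u /\ descendant v' u') \/
     (forall (r : 'I_n) (p : seq 'I_n), is_root r -> path F r p -> last r p = v' ->
        exists2 u', u' \in r :: p & org u' = u)).

End Decomposition.

From mathcomp Require Import all_boot order.
Set Implicit Arguments. Unset Strict Implicit. Unset Printing Implicit Defensive.

(* Induction along the recursion defining ddp, with decompositions built on arbitrary
   finite vertex types and relabelled by 'I_n at the end.  If D[S] has a single
   reachable fragment, put a new source labelled v above a decomposition of D[S - v]:
   every root-to-node path then starts at v, which validates all edges into v, and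
   every other vertex lies below the new source, which validates all edges out of v.
   If D[S] has several fragments, take the disjoint union of decompositions of the
   fragments: it is valid because a reachable fragment is closed under out-edges in
   D[S], and its depth is the maximum of theirs. *)

Definition is_source (T : finType) (F : rel T) (w : T) : bool := [forall x, ~~ F x w].

Definition acyclic (T : finType) (F : rel T) : Prop := forall x y, F x y -> ~~ connect F y x.

Definition paths_bounded (T : finType) (F : rel T) (k : nat) : Prop :=
  forall x p, path F x p -> (size p).+1 <= k.

Definition has_rooted_path (T : finType) (F : rel T) (k : nat) : Prop :=
  exists r p, [/\ is_source F r, path F r p & (size p).+1 = k].

Lemma path_suffix (T : eqType) (e : rel T) x p y : path e x p -> y \in x :: p ->
  exists q, [/\ path e y q, last y q = last x p & {subset y :: q <= x :: p}].
Proof.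
move=> Pp; rewrite inE => /predU1P[-> | y_p]; first by exists p; split.
move: Pp; case/splitPr: y_p => p1 p2.
rewrite cat_path last_cat /= => /and3P[_ _ Pp2]; exists p2; split=> // z z_in.
by rewrite inE mem_cat z_in !orbT.
Qed.

Lemma eq_bigminn_cond (I : finType) (P : pred I) (F : I -> nat) b j :
  P j -> (forall i, P i -> F i <= b) -> exists2 i, P i & \big[minn/b]_(i | P i) F i = F i.
Proof.
move=> Pj F_le; exists [arg min_(i < j | P i) F i]%O; first by case: Order.TotalTheory.arg_minP.
by rewrite -(Order.TotalTheory.bigmin_eq_arg b j P F Pj F_le).
Qed.

(* An ancestor of [w] with fewest ancestors is a source: a predecessor of it would
   have strictly fewer. *)
Lemma acyclic_source_connect (T : finType) (F : rel T) :
  acyclic F -> forall w, exists2 r, is_source F r & connect F r w.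
Proof.
move=> acyc w; pose anc y := [set z | connect F z y].
have [r r_w r_min] := arg_minnP (P := connect F ^~ w) (fun y => #|anc y|) (connect0 F w).
exists r => //; apply/forallP=> x; apply/negP=> Fxr.
have : #|anc r| <= #|anc x| by apply: r_min; exact: connect_trans (connect1 Fxr) r_w.
apply/negP; rewrite -ltnNge; apply: proper_card; apply/properP; split.
  by apply/subsetP=> z; rewrite !inE => /connect_trans; apply; apply: connect1.
by exists r; rewrite !inE ?connect0 ?(negbTE (acyc _ _ Fxr)).
Qed.

Section PathTransfer.
Variables (T' T : finType) (F' : rel T') (F : rel T) (h : T' -> T).
Hypotheses (h_rel : forall a b, F (h a) (h b) = F' a b)
           (h_succ : forall a z, F (h a) z -> z \in codom h).

Lemma path_emb a q : path F (h a) (map h q) = path F' a q.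
Proof. by rewrite path_map; apply: eq_path; apply: h_rel. Qed.

Lemma path_embP a q : path F (h a) q -> exists2 q', q = map h q' & path F' a q'.
Proof.
elim: q a => [|z q IHq] a /=; first by exists [::].
case/andP=> /[dup] /h_succ/codomP[b ->]; rewrite h_rel => Fab.
by case/IHq=> q' -> Pq'; exists (b :: q'); rewrite //= Fab.
Qed.

End PathTransfer.

Record embedding (T' T : finType) (F' : rel T') (F : rel T) (h : T' -> T) : Prop :=
  Embedding {
    emb_rel : forall a b, F (h a) (h b) = F' a b;
    emb_succ : forall a z, F (h a) z -> z \in codom h;
    emb_inj : injective h;
    emb_rooted : forall r p, is_source F r -> path F r p -> last r p \in codom h ->
      exists2 r', is_source F' r' & h r' \in r :: p }.

Section Embedding.
Variables (T' T : finType) (F' : rel T') (F : rel T) (h : T' -> T).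
Hypothesis emb : embedding F' F h.
Let h_rel := emb_rel emb.
Let h_succ := emb_succ emb.

Lemma connect_emb a b : connect F (h a) (h b) = connect F' a b.
Proof.
apply/connectP/connectP=> [[q /(path_embP h_rel h_succ)[q' -> Pq']] | [q Pq ->]].
  by rewrite last_map => /(emb_inj emb) ->; exists q'.
by exists (map h q); rewrite ?(path_emb h_rel) ?last_map.
Qed.

Lemma acyclic_emb : acyclic F' -> forall a z, F (h a) z -> ~~ connect F z (h a).
Proof.
move=> acyc a z /[dup] /h_succ/codomP[b ->].
by rewrite h_rel connect_emb; apply: acyc.
Qed.

Lemma bounded_emb k : paths_bounded F' k -> forall a p, path F (h a) p -> (size p).+1 <= k.
Proof. by move=> bound a p /(path_embP h_rel h_succ)[p' -> /bound]; rewrite size_map. Qed.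

Lemma rooted_path_emb k : (forall a, is_source F' a -> is_source F (h a)) ->
  has_rooted_path F' k -> has_rooted_path F k.
Proof.
move=> src_h [r [p [src Pp <-]]].
by exists (h r), (map h p); rewrite (path_emb h_rel) size_map src_h.
Qed.

End Embedding.

Lemma cancel_embedding (T' T : finType) (F : rel T) (h : T' -> T) (g : T -> T') :
  cancel h g -> cancel g h -> embedding F (relpre h F) g.
Proof.
move=> hK gK; split.
- by move=> a b /=; rewrite !gK.
- by move=> a z _; rewrite -[z]hK codom_f.
- exact: can_inj gK.
- move=> r p src _ _; exists (h r); last by rewrite hK mem_head.
  by apply/forallP=> x; have := forallP src (g x); rewrite /= gK.
Qed.

(* The new source points only to the old sources, so that a rooted path of the new
   DAG is the new source followed by a rooted path of the old one. *)
Definition add_source (T : finType) (F : rel T) : rel (option T) :=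
  fun x y => match x, y with
  | Some a, Some b => F a b
  | None, Some b => is_source F b
  | _, None => false
  end.

Section AddSource.
Variables (T : finType) (F : rel T).
Local Notation G := (add_source F).

Lemma is_source_add_source x : is_source G x = (x == None).
Proof.
case: x => [b|]; last by apply/forallP=> -[].
apply/negbTE/forallPn; case src: (is_source F b); first by exists None; rewrite /= src.
by have /forallPn[a] := negbT src; rewrite negbK => Fab; exists (Some a); rewrite /= Fab.
Qed.

Lemma Some_embedding : embedding F G Some.
Proof.
split=> //; first by move=> a [b|] // _; apply: codom_f.
- exact: Some_inj.
- move=> r p; rewrite is_source_add_source => /eqP-> {r}.
  case: p => [_ /codomP[? //] | z p /= /andP[Fz _] _].
  by case: z Fz => // b src; exists b; rewrite // !inE eqxx orbT.
Qed.

Lemma connect_add_source_None x : connect G x None -> x = None.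
Proof.
case/connectP=> p; elim: p x => [|z p IHp] x /=; first by move=> _ ->.
by case/andP=> + /IHp Lp /Lp Ez; rewrite Ez; case: x.
Qed.

Lemma acyclic_add_source : acyclic F -> acyclic G.
Proof.
move=> acyc [a|] y; first exact: acyclic_emb Some_embedding acyc a y.
by case: y => // b _; apply/negP => /connect_add_source_None.
Qed.

Lemma bounded_add_source k : paths_bounded F k -> paths_bounded G k.+1.
Proof.
move=> bound; have bound_Some := bounded_emb Some_embedding bound.
case=> [a p /bound_Some /leqW // | [|[b|] p] //= /andP[_ /bound_Some //]].
Qed.

Lemma rooted_path_add_source k : (0 < k -> has_rooted_path F k) -> has_rooted_path G k.+1.
Proof.
case: k => [_ | k /(_ isT)[r [p [src Pp <-]]]].
  by exists None, [::]; rewrite is_source_add_source.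
exists None, (Some r :: map Some p); rewrite is_source_add_source /= src size_map.
by rewrite (path_emb (emb_rel Some_embedding)).
Qed.

End AddSource.

Definition copair (T1 T2 A : Type) (f1 : T1 -> A) (f2 : T2 -> A) (x : T1 + T2) : A :=
  match x with inl a => f1 a | inr b => f2 b end.

Definition sum_rel (T1 T2 : finType) (F1 : rel T1) (F2 : rel T2) : rel (T1 + T2) :=
  fun x y => match x, y with
  | inl a, inl b => F1 a b
  | inr a, inr b => F2 a b
  | _, _ => false
  end.

Section DisjointUnion.
Variables (T1 T2 : finType) (F1 : rel T1) (F2 : rel T2).
Local Notation F := (sum_rel F1 F2).

Lemma is_source_inl a : is_source F (inl a) = is_source F1 a.
Proof. by apply/forallP/forallP=> [src x | src [x|x]]; [apply: (src (inl x)) | apply: src |]. Qed.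

Lemma is_source_inr b : is_source F (inr b) = is_source F2 b.
Proof. by apply/forallP/forallP=> [src x | src [x|x]]; [apply: (src (inr x)) | | apply: src]. Qed.

Lemma inl_succ a z : F (inl a) z -> z \in codom inl.
Proof. by case: z => // b _; apply: codom_f. Qed.

Lemma inr_succ b z : F (inr b) z -> z \in codom inr.
Proof. by case: z => // a _; apply: codom_f. Qed.

Lemma inl_embedding : embedding F1 F inl.
Proof.
split=> //; [exact: inl_succ | by move=> ? ? [] |].
move=> [a|b] p src Pp; first by exists a; rewrite -?is_source_inl ?mem_head.
have [p' -> _] := path_embP (F' := F2) (fun _ _ => erefl) inr_succ Pp.
by rewrite last_map => /codomP[].
Qed.

Lemma inr_embedding : embedding F2 F inr.
Proof.
split=> //; [exact: inr_succ | by move=> ? ? [] |].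
move=> [a|b] p src Pp; last by exists b; rewrite -?is_source_inr ?mem_head.
have [p' -> _] := path_embP (F' := F1) (fun _ _ => erefl) inl_succ Pp.
by rewrite last_map => /codomP[].
Qed.

End DisjointUnion.

Section Decompositions.
Variables (V : finType) (E : rel V).

Definition guarded (T : finType) (F : rel T) (org : T -> V) (w : T) (u : V) : Prop :=
  forall r p, is_source F r -> path F r p -> last r p = w -> u \in map org (r :: p).

Definition valid_at (T : finType) (F : rel T) (org : T -> V) (w : T) (u : V) : Prop :=
  (exists2 u', org u' = u & connect F w u') \/ guarded F org w u.

(* A valid DAG-depth decomposition of D[S] of depth k; k = 0 exactly when S is empty. *)
Record decomposes (T : finType) (F : rel T) (org : T -> V) (S : {set V}) (k : nat) : Prop :=
  Decomposes {
    decomp_acyclic : acyclic F;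
    decomp_codom : S =i codom org;
    decomp_valid : forall w u, u \in S -> E (org w) u -> valid_at F org w u;
    decomp_bounded : paths_bounded F k;
    decomp_rooted : 0 < k -> has_rooted_path F k }.

Definition out_closed (S R : {set V}) : Prop :=
  forall x u, x \in R -> u \in S -> E x u -> u \in R.

Section EmbeddingValidity.
Variables (T' T : finType) (F' : rel T') (F : rel T) (h : T' -> T).
Variables (org' : T' -> V) (org : T -> V).
Hypotheses (emb : embedding F' F h) (h_org : org \o h =1 org').

Lemma guarded_emb w u : guarded F' org' w u -> guarded F org (h w) u.
Proof.
move=> guard r p src Pp Lp.
have Lp_h : last r p \in codom h by rewrite Lp codom_f.
have [r' src' /(path_suffix Pp)[q [Pq Lq q_sub]]] := emb_rooted emb src Pp Lp_h.
have [q' Eq Pq'] := path_embP (emb_rel emb) (emb_succ emb) Pq; rewrite Eq Lp last_map in Lq.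
have /mapP[x x_q ->] : u \in map (org \o h) (r' :: q').
  by rewrite (eq_map h_org) (guard _ _ src' Pq' (emb_inj emb Lq)).
by rewrite /= -map_cons map_f // q_sub // Eq -map_cons map_f.
Qed.

Lemma valid_emb w u : valid_at F' org' w u -> valid_at F org (h w) u.
Proof.
case=> [[u' <- con] | guard]; [left | by right; apply: guarded_emb].
by exists (h u'); [apply: h_org | rewrite (connect_emb emb)].
Qed.

End EmbeddingValidity.

Lemma out_closedU (S R1 R2 : {set V}) :
  out_closed S R1 -> out_closed S R2 -> out_closed S (R1 :|: R2).
Proof.
move=> cl1 cl2 x u; rewrite !inE => /orP[xR1 | xR2] uS Exu.
  by rewrite (cl1 x u). by rewrite (cl2 x u) ?orbT.
Qed.

Lemma out_closedS (S S' R : {set V}) : S' \subset S -> out_closed S R -> out_closed S' R.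
Proof. by move=> /subsetP sub cl x u xR /sub; apply: cl. Qed.

Lemma decomposes_set0 : decomposes [rel x y : void | false] (of_void V) set0 0.
Proof. by split=> [[] | u | [] | [] | //]; rewrite inE; apply/esym/codomP=> -[[]]. Qed.

Lemma decomposes_add_source (T : finType) (F : rel T) (org : T -> V) (S : {set V}) v k :
  v \in S -> decomposes F org (S :\ v) k -> decomposes (add_source F) (oapp org v) S k.+1.
Proof.
move=> vS [acyc cod valid bound rooted]; split.
- exact: acyclic_add_source.
- move=> u; apply/idP/codomP=> [uS | [[a|] -> //]]; last first.
    by move: (cod (org a)); rewrite codom_f !inE => /andP[].
  have [-> | u_v] := eqVneq u v; first by exists None.
  have /codomP[a ->] : u \in codom org by rewrite -cod !inE u_v uS.
  by exists (Some a).
- case=> [w|] u uS Ewu; have [-> | u_v] := eqVneq u v.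
  + by right=> r p; rewrite is_source_add_source => /eqP-> _ _; apply: mem_head.
  + by apply: (valid_emb (Some_embedding F) (frefl _)); apply: valid Ewu; rewrite !inE u_v.
  + by left; exists None.
  + have /codomP[a ->] : u \in codom org by rewrite -cod !inE u_v uS.
    left; exists (Some a) => //; have [r src r_a] := acyclic_source_connect acyc a.
    apply: (@connect_trans _ _ (Some r)); first exact: connect1.
    by rewrite (connect_emb (Some_embedding F)).
- exact: bounded_add_source.
- by move=> _; apply: rooted_path_add_source.
Qed.

Lemma decomposes_union (T1 T2 : finType) (F1 : rel T1) (F2 : rel T2) o1 o2
    (S1 S2 : {set V}) k1 k2 :
  out_closed (S1 :|: S2) S1 -> out_closed (S1 :|: S2) S2 ->
  decomposes F1 o1 S1 k1 -> decomposes F2 o2 S2 k2 ->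
  decomposes (sum_rel F1 F2) (copair o1 o2) (S1 :|: S2) (maxn k1 k2).
Proof.
move=> cl1 cl2 [acyc1 cod1 val1 bd1 rt1] [acyc2 cod2 val2 bd2 rt2].
have emb1 := inl_embedding F1 F2; have emb2 := inr_embedding F1 F2.
split.
- by case=> [a|b]; [apply: acyclic_emb emb1 acyc1 a | apply: acyclic_emb emb2 acyc2 b].
- move=> u; rewrite inE cod1 cod2.
  apply/orP/codomP=> [[/codomP[a ->] | /codomP[b ->]] | [[a|b] ->]].
  + by exists (inl a).
  + by exists (inr b).
  + by left; apply: codom_f.
  + by right; apply: codom_f.
- have o1S w : o1 w \in S1 by rewrite cod1 codom_f.
  have o2S w : o2 w \in S2 by rewrite cod2 codom_f.
  case=> [w|w] u uS Ewu.
    exact: (valid_emb emb1 (frefl _)) (val1 _ _ (cl1 _ _ (o1S w) uS Ewu) Ewu).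
  exact: (valid_emb emb2 (frefl _)) (val2 _ _ (cl2 _ _ (o2S w) uS Ewu) Ewu).
- case=> [a|b] p Pp.
    exact: leq_trans (bounded_emb emb1 bd1 Pp) (leq_maxl k1 k2).
  exact: leq_trans (bounded_emb emb2 bd2 Pp) (leq_maxr k1 k2).
- have src1 a : is_source F1 a -> is_source (sum_rel F1 F2) (inl a) by rewrite is_source_inl.
  have src2 b : is_source F2 b -> is_source (sum_rel F1 F2) (inr b) by rewrite is_source_inr.
  case: (leqP k1 k2) => _.
    by move/rt2; exact: (rooted_path_emb emb2 src2).
  by move/rt1; exact: (rooted_path_emb emb1 src1).
Qed.

Lemma decomposes_relpre (T' T : finType) (F : rel T) (org : T -> V) (h : T' -> T) S k :
  bijective h -> decomposes F org S k -> decomposes (relpre h F) (org \o h) S k.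
Proof.
case=> g hK gK [acyc cod valid bound rooted].
have emb := cancel_embedding F hK gK.
have org_g : (org \o h) \o g =1 org by move=> x /=; rewrite gK.
split.
- by move=> a b; rewrite -[a]hK; exact: (acyclic_emb emb acyc).
- move=> u; rewrite cod; apply/codomP/codomP=> -[x ->]; last by exists (h x).
  by exists (g x); rewrite /= gK.
- move=> w u uS Ewu; rewrite -[w]hK.
  exact: (valid_emb emb org_g (valid _ _ uS Ewu)).
- by move=> a p; rewrite -[a]hK; exact: (bounded_emb emb bound).
- have src_g a : is_source F a -> is_source (relpre h F) (g a).
    by move=> src; apply/forallP=> x /=; rewrite gK (forallP src).
  by move/rooted; exact: (rooted_path_emb emb src_g).
Qed.

Lemma decomposes_valid_decomp n (F : rel 'I_n) (org : 'I_n -> V) k :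
  0 < #|V| -> decomposes F org [set: V] k -> valid_decomp E F org /\ depth F k.
Proof.
move=> V_gt0 [acyc cod valid bound rooted].
have /card_gt0P[v0 _] := V_gt0.
have /codomP[w0 _] : v0 \in codom org by rewrite -cod inE.
have [r [p [_ Pp Sp]]] := rooted (bound w0 [::] isT).
split; last by split; [exists r, p | exact: bound].
split=> //; split=> [v | v' u /(valid v' u (in_setT u))[[u' <- con] | guard]].
- have /codomP[w ->] : v \in codom org by rewrite -cod inE.
  by exists w.
- by left; exists u'.
- right=> r' p' src Pp' Lp'; have /mapP[u' u'_in ->] := guard r' p' src Pp' Lp'.
  by exists u'.
Qed.

Lemma decomposes_bigcup (S : {set V}) (P : {set {set V}}) (f : {set V} -> nat) :
  (forall R, R \in P -> [/\ R \subset S, out_closed S R &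
     exists (T : finType) (F : rel T) (org : T -> V), decomposes F org R (f R)]) ->
  exists (T : finType) (F : rel T) (org : T -> V),
    decomposes F org (\bigcup_(R in P) R) (\max_(R in P) f R).
Proof.
pose K (U : {set V}) (m : nat) := [/\ U \subset S, out_closed S U &
  exists (T : finType) (F : rel T) (org : T -> V), decomposes F org U m].
move=> decP; suff [] : K (\bigcup_(R in P) R) (\max_(R in P) f R) by [].
apply: (big_ind2 K) => //.
  split; [exact: sub0set | by move=> x u; rewrite inE |].
  by exists void, [rel x y : void | false], (of_void V); apply: decomposes_set0.
move=> U1 m1 U2 m2 [sub1 cl1 [T1 [F1 [o1 dec1]]]] [sub2 cl2 [T2 [F2 [o2 dec2]]]].
have sub12 : U1 :|: U2 \subset S by rewrite subUset sub1.
split; [done | exact: out_closedU |].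
exists _, (sum_rel F1 F2), (copair o1 o2).
by apply: decomposes_union dec1 dec2; apply: (out_closedS sub12).
Qed.

Lemma reach_sub (S : {set V}) r : reach E S r \subset S.
Proof. by apply/subsetP=> y; rewrite inE => /andP[]. Qed.

Lemma out_closed_reach (S : {set V}) r : out_closed S (reach E S r).
Proof.
move=> x u; rewrite !inE => /andP[xS r_x] uS Exu; rewrite uS.
by apply: connect_trans r_x (connect1 _); rewrite /induced /= xS uS.
Qed.

Lemma frag_cand_reach (S : {set V}) r : r \in S -> frag_cand E S (reach E S r).
Proof.
move=> rS; rewrite /frag_cand reach_sub; apply/existsP; exists r.
by rewrite inE rS connect0 subxx.
Qed.

Lemma fragment_reach (S R : {set V}) :
  R \in fragments E S -> exists2 r, r \in S & R = reach E S r.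
Proof.
rewrite inE => /andP[/andP[RS /existsP[r /andP[rR R_r]]] /forallP max_R].
have rS := subsetP RS r rR; exists r => //.
by apply/esym/eqP/(implyP (max_R _)); rewrite frag_cand_reach.
Qed.

Lemma frag_cand_fragment (S C : {set V}) :
  frag_cand E S C -> exists2 R, R \in fragments E S & C \subset R.
Proof.
move=> candC; pose bigger R := frag_cand E S R && (C \subset R).
have [|R /andP[candR CR] R_max] := arg_maxnP (P := bigger) (fun R => #|R|) (i0 := C).
  by rewrite /bigger candC subxx.
exists R => //; rewrite inE candR; apply/forallP=> R'; apply/implyP=> /andP[candR' RR'].
rewrite eq_sym eqEcard RR'; apply: R_max.
by rewrite /bigger candR' (subset_trans CR RR').
Qed.

Lemma bigcup_fragments (S : {set V}) : \bigcup_(R in fragments E S) R = S.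
Proof.
apply/eqP; rewrite eqEsubset; apply/andP; split.
  by apply/bigcupsP=> R /fragment_reach[r _ ->]; apply: reach_sub.
apply/subsetP=> x xS; have [R fragR reach_R] := frag_cand_fragment (frag_cand_reach xS).
by apply/bigcupP; exists R => //; apply: (subsetP reach_R); rewrite inE xS connect0.
Qed.

Lemma fragment_proper (S R : {set V}) :
  #|fragments E S| != 1 -> R \in fragments E S -> R \proper S.
Proof.
move=> frag_neq1 fragR; have [r rS ER] := fragment_reach fragR.
rewrite properEneq {2}ER reach_sub andbT; apply: contra frag_neq1 => /eqP RS.
have candS : frag_cand E S S by move: fragR; rewrite RS inE => /andP[].
apply/cards1P; exists S; apply/setP=> R'; rewrite in_set1.
apply/idP/eqP=> [| ->]; last by rewrite -{1}RS.
rewrite inE => /andP[/andP[R'S _] /forallP/(_ S)].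
by rewrite candS R'S => /eqP->.
Qed.

Lemma card_setD1_fuel (S : {set V}) v n : v \in S -> 1 < #|S| <= n.+1 -> 0 < #|S :\ v| <= n.
Proof. by move=> vS; rewrite (cardsD1 v S) vS add1n !ltnS. Qed.

Lemma fragment_card_fuel (S R : {set V}) n :
  #|fragments E S| != 1 -> R \in fragments E S -> #|S| <= n.+1 -> 0 < #|R| <= n.
Proof.
move=> frag_neq1 fragR S_le; apply/andP; split.
  by have [r rS ->] := fragment_reach fragR; apply/card_gt0P; exists r; rewrite inE rS connect0.
by rewrite -ltnS (leq_trans _ S_le) // proper_card // fragment_proper.
Qed.

Lemma ddp_fuel_le_card n (S : {set V}) : 0 < #|S| <= n -> ddp_fuel E n S <= #|S|.
Proof.
elim: n S => [|n IHn] S /andP[S_gt0 S_le]; first by have := leq_trans S_gt0 S_le.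
rewrite /=; have [-> // | S_neq1] := eqVneq #|S| 1.
have S_card : 1 < #|S| <= n.+1 by rewrite ltn_neqAle eq_sym S_neq1 S_gt0.
case: ifP => [_ | /negbT frag_neq1].
  have le_card v : v \in S -> ddp_fuel E n (S :\ v) <= #|S :\ v|.
    by move=> vS; apply/IHn/card_setD1_fuel.
  have /card_gt0P[v0 v0S] := S_gt0.
  have [v vS ->] := eq_bigminn_cond v0S
    (fun v vS => leq_trans (le_card v vS) (subset_leq_card (subD1set S v))).
  exact: leq_ltn_trans (le_card v vS) (proper_card (properD1 vS)).
apply/bigmax_leqP=> R fragR; have R_card := fragment_card_fuel frag_neq1 fragR S_le.
have R_sub := proper_sub (fragment_proper frag_neq1 fragR).
exact: leq_trans (IHn R R_card) (subset_leq_card R_sub).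
Qed.

Lemma decomposes_ddp_fuel n (S : {set V}) : 0 < #|S| <= n ->
  exists (T : finType) (F : rel T) (org : T -> V), decomposes F org S (ddp_fuel E n S).
Proof.
elim: n S => [|n IHn] S /andP[S_gt0 S_le]; first by have := leq_trans S_gt0 S_le.
rewrite /=; have [/eqP/cards1P[x ->] | S_neq1] := eqVneq #|S| 1.
  exists _, (add_source [rel x y : void | false]), (oapp (of_void V) x).
  by apply: decomposes_add_source (set11 x) _; rewrite setDv; apply: decomposes_set0.
have S_card : 1 < #|S| <= n.+1 by rewrite ltn_neqAle eq_sym S_neq1 S_gt0.
case: ifP => [_ | /negbT frag_neq1].
  have le_card v : v \in S -> ddp_fuel E n (S :\ v) <= #|S|.
    move=> vS; have Sv_card := card_setD1_fuel vS S_card.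
    exact: leq_trans (ddp_fuel_le_card Sv_card) (subset_leq_card (subD1set S v)).
  have /card_gt0P[v0 v0S] := S_gt0.
  have [v vS ->] := eq_bigminn_cond v0S le_card.
  have [T [F [org dec]]] := IHn (S :\ v) (card_setD1_fuel vS S_card).
  by exists _, (add_source F), (oapp org v); apply: decomposes_add_source.
have := decomposes_bigcup (S := S) (P := fragments E S) (f := ddp_fuel E n).
rewrite bigcup_fragments; apply=> R fragR.
have R_card := fragment_card_fuel frag_neq1 fragR S_le.
have [r _ ER] := fragment_reach fragR; rewrite ER in R_card *.
by split; [exact: reach_sub | exact: out_closed_reach | apply: IHn].
Qed.

End Decompositions.

Theorem theorem3p2 (V : finType) (E : rel V) (k : nat) :
  irreflexive E -> 0 < #|V| -> ddp E [set: V] = k ->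
  exists (n : nat) (F : rel 'I_n) (org : 'I_n -> V),
    valid_decomp E F org /\ depth F k.
Proof.
(* Loops need no special treatment: a vertex is its own descendant. *)
move=> _ V_gt0 <-.
have [T [F [org dec]]] : exists (T : finType) (F : rel T) (org : T -> V),
    decomposes E F org [set: V] (ddp E [set: V]).
  by apply: decomposes_ddp_fuel; rewrite cardsT V_gt0 /=.
exists #|T|, (relpre enum_val F), (org \o enum_val).
exact: decomposes_valid_decomp V_gt0 (decomposes_relpre (enum_val_bij T) dec).
Qed.
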